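(* Let $F,G,H$ be graphs. (a) If $F\to G$ and $c=\mathsf{HDE}(F,G)$, then $\hom(F,T)\ge \hom(G,T)^c$ for all graphs $T$. (b) The relation $\succcurlyeq$ (where $F\succcurlyeq G$ means $F\to G$ and $\mathsf{HDE}(F,G)\ge1$) is a partial order on graphs. (c) If $F\to G$ and $G\to H$, then $\mathsf{HDE}(F,H)\ge \mathsf{HDE}(F,G)\cdot\mathsf{HDE}(G,H)$. (d) If $F\to G$, then $\mathsf{HDE}(m\cdot F,n\cdot G)=\frac mn\,\mathsf{HDE}(F,G)$ for all positive integers $m,n$. (e) If there is a homomorphism from $F$ onto $G$ that is surjective on vertices, then $F\succcurlyeq G$. (f) If $F\to G$, then $\mathsf{HDE}(F,G)>0$ if and only if $\bigcup_{\varphi\in\mathsf{Hom}(F,G)}\varphi(V_F)=V_G$.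
   Context: Graphs are finite directed graphs $G=(V_G,E_G)$ with $V_G$ nonempty finite and $E_G\subseteq V_G\times V_G$ (loops allowed). A homomorphism $\varphi:F\to G$ is a map $V_F\to V_G$ with $(\varphi(a),\varphi(b))\in E_G$ for all $(a,b)\in E_F$; $\mathsf{Hom}(F,G)$ is their set, $\hom(F,G)$ its size, and $F\to G$ means $\hom(F,G)\ge1$. For $F\to G$, $\mathsf{HDE}(F,G)=\sup\{c\in\mathbb R:\hom(F,T)\ge\hom(G,T)^c\text{ for all graphs }T\}$. $k\cdot G$ denotes the disjoint union of $k$ copies of $G$. *)

From Stdlib Require Import Reals ClassicalEpsilon.
From mathcomp Require Import all_boot.
Set Implicit Arguments. Unset Strict Implicit. Unset Printing Implicit Defensive.

Record graph : Type := Graph {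
  gV : finType;
  gE : rel gV;
  gV_nonempty : 0 < #|gV| }.

Definition is_hom (F G : graph) (f : gV F -> gV G) : bool :=
  [forall a, forall b, gE a b ==> gE (f a) (f b)].

Definition hom (F G : graph) : nat :=
  #|[pred f : {ffun gV F -> gV G} | is_hom f]|.

Definition arrow (F G : graph) : Prop := 0 < hom F G.

(* n ^ c for a natural number n and real c, with the convention 0 ^ c = 0. *)
Definition hpow (n : nat) (c : R) : R :=
  if n == 0 then R0 else Rpower (INR n) c.

Definition HDE_set (F G : graph) : R -> Prop :=
  fun c => forall T : graph, Rle (hpow (hom G T) c) (INR (hom F T)).

Definition HDE (F G : graph) : R :=
  epsilon (inhabits R0) (is_lub (HDE_set F G)).

Definition succeq (F G : graph) : Prop := arrow F G /\ Rle R1 (HDE F G).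

Definition iso (F G : graph) : Prop :=
  exists f : gV F -> gV G, bijective f /\ forall a b, gE (f a) (f b) = gE a b.

Lemma copies_nonempty (k : nat) (hk : 0 < k) (G : graph) :
  0 < #|{: 'I_k * gV G}|.
Proof. by rewrite card_prod card_ord muln_gt0 hk gV_nonempty. Qed.

(* k · G : disjoint union of k copies of G (k >= 1) *)
Definition copies (k : nat) (hk : 0 < k) (G : graph) : graph :=
  @Graph (prod 'I_k (gV G))
    (fun x y => (x.1 == y.1) && gE x.2 y.2)
    (copies_nonempty hk G).

From Stdlib Require Import Reals ClassicalEpsilon Lra Classical.
From mathcomp Require Import all_boot.
Set Implicit Arguments. Unset Strict Implicit. Unset Printing Implicit Defensive.

(* Taking logarithms, HDE(F,G) is the largest c with
   c ln hom(G,T) <= ln hom(F,T) for every T with hom(G,T) > 0: these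
   constraints are closed in c, and T = K2loop bounds them by |V_F|/|V_G|, so
   the supremum is attained, which is (a); (c) and (d) compose and rescale
   these inequalities, using hom(k.F,T) = hom(F,T)^k.  A vertex-surjective
   homomorphism F -> G embeds Hom(G,T) into Hom(F,T), giving (e); if F and G
   dominate each other their hom counts agree, hence they are isomorphic by
   Lovász's theorem.  For (f): if homomorphisms F -> G cover V_G, restricting
   along one covering homomorphism per vertex embeds Hom(G,T) into
   Hom(F,T)^|V_G|, so HDE(F,G) >= 1/|V_G|; if a vertex v is missed, cloning v
   makes hom(G,T) unbounded while hom(F,T) stays at most hom(F,G). *)

Lemma is_homP (F G : graph) (f : gV F -> gV G) :
  reflect (forall a b, gE a b -> gE (f a) (f b)) (is_hom f).
Proof.
apply: (iffP forallP) => [H a b eab | H a].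
  by have /forallP/(_ b)/implyP := H a; apply.
by apply/forallP => b; apply/implyP; apply: H.
Qed.

Lemma is_hom_finfun (F G : graph) (f : gV F -> gV G) : is_hom (finfun f) = is_hom f.
Proof. by apply/is_homP/is_homP => H a b /H; rewrite !ffunE. Qed.

Lemma is_hom_comp (F G H : graph) (f : gV F -> gV G) (g : gV G -> gV H) :
  is_hom f -> is_hom g -> is_hom (g \o f).
Proof. by move=> /is_homP hf /is_homP hg; apply/is_homP => a b /hf /hg. Qed.

Lemma hom_gt0P (F G : graph) :
  reflect (exists f : gV F -> gV G, is_hom f) (0 < hom F G).
Proof.
apply: (iffP card_gt0P) => [[f]|[f hf]].
  by rewrite inE => hf; exists f.
by exists (finfun f); rewrite inE is_hom_finfun.
Qed.

Lemma arrow_trans (F G H : graph) : arrow F G -> arrow G H -> arrow F H.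
Proof.
move=> /hom_gt0P [f hf] /hom_gt0P [g hg]; apply/hom_gt0P.
by exists (g \o f); apply: is_hom_comp.
Qed.

Lemma leq_card_on (T1 T2 : finType) (A : {pred T1}) (B : {pred T2}) (h : T1 -> T2) :
  {in A &, injective h} -> {in A, forall x, h x \in B} -> #|A| <= #|B|.
Proof.
move=> inj hAB; rewrite -(card_in_imset inj); apply/subset_leq_card/subsetP.
by move=> y /imsetP [x xA ->]; exact: hAB.
Qed.

Lemma eq_card_on (T1 T2 : finType) (A : {pred T1}) (B : {pred T2}) (h : T1 -> T2) :
  {in A &, injective h} -> {in A, forall x, h x \in B} ->
  {in B, forall y, exists2 x, x \in A & y = h x} -> #|A| = #|B|.
Proof.
move=> inj hAB hBA; rewrite -(card_in_imset inj); apply: eq_card => y.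
by apply/imsetP/idP => [[x xA ->]|/hBA //]; exact: hAB.
Qed.

Lemma hom_le_surj (F G T : graph) (f : gV F -> gV G) :
  is_hom f -> (forall v, exists a, f a = v) -> hom G T <= hom F T.
Proof.
move=> hf fsurj.
apply: (@leq_card_on _ _ _ _ (fun psi : {ffun gV G -> gV T} => finfun (psi \o f))).
  move=> p q _ _ e; apply/ffunP => v; have [a <-] := fsurj v.
  by have := congr1 (fun z : {ffun gV F -> gV T} => z a) e; rewrite /= !ffunE.
by move=> p; rewrite !inE is_hom_finfun => hp; apply: is_hom_comp.
Qed.

Lemma hom_copies (k : nat) (hk : 0 < k) (F T : graph) :
  hom (copies hk F) T = hom F T ^ k.
Proof.
rewrite /hom -[in RHS](card_ord k) -card_ffun_on.
apply: (@eq_card_on _ _ _ _ (fun f : {ffun 'I_k * gV F -> gV T} =>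
    [ffun i => [ffun a => f (i, a)]])).
- move=> p q _ _ e; apply/ffunP => [[i a]].
  by have := congr1 (fun z : {ffun 'I_k -> {ffun gV F -> gV T}} => z i a) e;
    rewrite /= !ffunE.
- move=> f; rewrite inE => /is_homP hf; apply/ffun_onP => i.
  rewrite ffunE inE; apply/is_homP => a b eab; rewrite !ffunE.
  by apply: (hf (i, a) (i, b)); rewrite /= eqxx.
- move=> g /ffun_onP hg; exists [ffun p => g p.1 p.2].
    rewrite inE; apply/is_homP => [[i a] [j b]] /= /andP [/eqP <- eab].
    by rewrite !ffunE /=; have := hg i; rewrite inE => /is_homP; apply.
  by apply/ffunP => i; apply/ffunP => a; rewrite !ffunE.
Qed.

Lemma hom_le_cover (F G T : graph) :
  (forall v : gV G, exists f : gV F -> gV G, is_hom f /\ exists a, f a = v) ->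
  hom G T <= hom F T ^ #|gV G|.
Proof.
move=> cover; have [phi phiP] := fin_all_exists cover.
have [pt ptP] : exists pt : gV G -> gV F, forall v, phi v (pt v) = v.
  apply: (@fin_all_exists _ (fun _ => gV F) (fun v a => phi v a = v)) => v.
  by have [_ [a ha]] := phiP v; exists a.
rewrite /hom -card_ffun_on.
apply: (@leq_card_on _ _ _ _ (fun psi : {ffun gV G -> gV T} =>
   [ffun v => [ffun a => psi (phi v a)]])).
  move=> p q _ _ e; apply/ffunP => v.
  have := congr1 (fun z : {ffun gV G -> {ffun gV F -> gV T}} => z v (pt v)) e.
  by rewrite /= !ffunE ptP.
move=> p; rewrite inE => hp; apply/ffun_onP => v; rewrite ffunE inE.
rewrite (is_hom_finfun (fun a => p (phi v a))).
by apply: is_hom_comp => //; case: (phiP v).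
Qed.

Lemma card_bool_gt0 : 0 < #|{: bool}|. Proof. by rewrite card_bool. Qed.

Definition K2loop : graph := @Graph bool (fun _ _ => true) card_bool_gt0.

Lemma hom_K2loop (F : graph) : hom F K2loop = 2 ^ #|gV F|.
Proof.
rewrite /hom -card_bool -card_ffun; apply: eq_card => f.
by rewrite !inE; apply/is_homP.
Qed.

(* [clone v N] adds [N] twins of the vertex [v] to [G]. *)
Section Clone.

Variables (G : graph) (v : gV G) (N : nat).

Lemma clone_nonempty : 0 < #|{: gV G + 'I_N}|.
Proof. by rewrite card_sum ltn_addr // gV_nonempty. Qed.

Definition unclone (x : gV G + 'I_N) : gV G := if x is inl u then u else v.

Definition clone : graph :=
  @Graph (gV G + 'I_N)%type (fun x y => gE (unclone x) (unclone y)) clone_nonempty.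

Lemma is_hom_unclone : is_hom (unclone : gV clone -> gV G).
Proof. by apply/is_homP. Qed.

Lemma hom_clone_uncovered (F : graph) :
  (forall f : gV F -> gV G, is_hom f -> forall a, f a <> v) ->
  hom F clone <= hom F G.
Proof.
move=> uncovered.
have inlE (f : {ffun gV F -> gV clone}) a : is_hom f -> f a = inl (unclone (f a)).
  move=> hf; case E: (f a) => [u|i] //.
  by have := uncovered _ (is_hom_comp hf is_hom_unclone) a; rewrite /= E.
apply: (@leq_card_on _ _ _ _ (fun f : {ffun gV F -> gV clone} => finfun (unclone \o f))).
  move=> p q; rewrite !inE => hp hq e; apply/ffunP => a.
  rewrite (inlE _ _ hp) (inlE _ _ hq).
  by have := congr1 (fun z : {ffun gV F -> gV G} => z a) e; rewrite !ffunE /= => ->.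
move=> f; rewrite !inE is_hom_finfun => hf; exact: is_hom_comp hf is_hom_unclone.
Qed.

Lemma hom_clone_ge : N <= hom G clone.
Proof.
pose twin (i : 'I_N) u : gV clone := if u == v then inr i else inl u.
have untwin i u : unclone (twin i u) = u by rewrite /twin; case: eqP => [->|].
rewrite -{1}(card_ord N).
apply: (@leq_card_on _ _ [pred i : 'I_N | true] _ (fun i => finfun (twin i))).
  move=> i j _ _ e.
  have := congr1 (fun z : {ffun gV G -> gV clone} => z v) e.
  by rewrite !ffunE /twin eqxx; case.
by move=> i _; rewrite inE is_hom_finfun; apply/is_homP => a b; rewrite /= !untwin.
Qed.

End Clone.

Definition image_of (F T : graph) (f : {ffun gV F -> gV T}) : {set gV T} :=
  f @: [set: gV F].

Definition hom_into (F T : graph) (S : {set gV T}) : nat :=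
  #|[pred f : {ffun gV F -> gV T} | is_hom f && (image_of f \subset S)]|.

Definition hom_onto (F T : graph) (S : {set gV T}) : nat :=
  #|[pred f : {ffun gV F -> gV T} | is_hom f && (image_of f == S)]|.

Arguments hom_into : clear implicits.
Arguments hom_onto : clear implicits.

Lemma hom_into_sum (F T : graph) (S : {set gV T}) :
  hom_into F T S = \sum_(S' : {set gV T} | S' \subset S) hom_onto F T S'.
Proof.
rewrite /hom_into -sum1_card.
rewrite (partition_big (@image_of F T) (fun S' => S' \subset S)); last first.
  by move=> f; rewrite inE => /andP [].
apply: eq_bigr => S' sS'; rewrite sum1dep_card; apply: eq_card => f.
rewrite !inE; case: (image_of f =P S') => [->|]; rewrite ?sS' ?andbF //.
by case: (is_hom f).
Qed.

Lemma hom_into_set0 (F T : graph) : hom_into F T set0 = 0.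
Proof.
apply: eq_card0 => f; rewrite !inE; apply/negP => /andP [_ /subsetP sub].
have [a _] := card_gt0P (gV_nonempty F).
by have /sub := imset_f f (in_setT a); rewrite inE.
Qed.

Section Induced.

Variables (T : graph) (S : {set gV T}) (S_nonempty : 0 < #|S|).

Lemma induced_nonempty : 0 < #|{: {x : gV T | x \in S}}|.
Proof. by rewrite card_sig (@eq_card _ _ S) // => x; rewrite !inE. Qed.

Definition induced : graph :=
  @Graph {x : gV T | x \in S} (fun x y => gE (val x) (val y)) induced_nonempty.

Lemma hom_into_induced (F : graph) : hom_into F T S = hom F induced.
Proof.
have [x0 x0S] := card_gt0P S_nonempty.
pose u0 : gV induced := exist _ x0 x0S.
symmetry.
apply: (@eq_card_on _ _ _ _ (fun g : {ffun gV F -> gV induced} => finfun (val \o g))).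
- move=> p q _ _ e; apply/ffunP => a; apply: val_inj.
  by have := congr1 (fun z : {ffun gV F -> gV T} => z a) e; rewrite !ffunE.
- move=> g; rewrite !inE is_hom_finfun => hg; apply/andP; split.
    by apply/is_homP => a b /(elimT (is_homP _) hg).
  by apply/subsetP => y /imsetP [a _ ->]; rewrite ffunE /=; case: (g a).
- move=> f; rewrite inE => /andP [hf sf].
  have fS a : f a \in S by apply: (subsetP sf); apply: imset_f; rewrite inE.
  exists [ffun a => insubd u0 (f a) : gV induced].
    rewrite inE; apply/is_homP => a b eab; rewrite !ffunE /= !val_insubd !fS.
    exact: (elimT (is_homP _) hf).
  by apply/ffunP => a; rewrite !ffunE /= ffunE val_insubd fS.
Qed.

End Induced.

(* Möbius inversion of [hom_into_sum] over the subsets of [S], by strong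
   induction on [#|S|]; [hom_into] itself is a hom count into an induced
   subgraph. *)
Lemma hom_onto_eq (F G : graph) : (forall T, hom F T = hom G T) ->
  forall T (S : {set gV T}), hom_onto F T S = hom_onto G T S.
Proof.
move=> hom_eq T S; have [n] := ubnP #|S|; elim: n S => // n IH S /ltnSE leSn.
have into_eq : hom_into F T S = hom_into G T S.
  have [/cards0_eq ->|S_gt0] := posnP #|S|; first by rewrite !hom_into_set0.
  by rewrite !(hom_into_induced S_gt0).
move: into_eq; rewrite !hom_into_sum !(bigD1 S (subxx S)) /=.
rewrite (eq_bigr (fun S' => hom_onto G T S')); first by move/addIn.
move=> S' /andP [sS' nS']; apply: IH; apply: leq_trans leSn.
by apply: proper_card; rewrite properEneq nS'.
Qed.

Lemma exists_surj_hom (F G : graph) : (forall T, hom F T = hom G T) ->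
  exists g : {ffun gV G -> gV F}, is_hom g && (image_of g == setT).
Proof.
move=> hom_eq.
have : 0 < hom_onto F F [set: gV F].
  apply/card_gt0P; exists [ffun a => a]; rewrite inE; apply/andP; split.
    by rewrite is_hom_finfun; apply/is_homP.
  by apply/eqP/setP => a; rewrite !inE; apply/imsetP; exists a; rewrite ?inE ?ffunE.
rewrite (hom_onto_eq hom_eq) => /card_gt0P [g]; rewrite inE => hg.
by exists g.
Qed.

Definition edge_set (X : graph) : {pred gV X * gV X} := [pred p | gE p.1 p.2].
Arguments edge_set : clear implicits.

Lemma surj_ffun_card_le (F G : graph) (f : {ffun gV F -> gV G}) :
  image_of f = setT -> #|gV G| <= #|gV F|.
Proof. by move=> imf; rewrite -cardsT -imf -[X in _ <= X]cardsT leq_imset_card. Qed.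

Lemma surj_ffun_inj (F G : graph) (f : {ffun gV F -> gV G}) :
  image_of f = setT -> #|gV F| = #|gV G| -> injective f.
Proof.
move=> imf cardFG x y; have /imset_injP finj : #|image_of f| == #|[set: gV F]|.
  by rewrite imf !cardsT cardFG.
by apply: finj; rewrite inE.
Qed.

Lemma hom_inj_edge_card_le (F G : graph) (f : gV F -> gV G) :
  is_hom f -> injective f -> #|edge_set F| <= #|edge_set G|.
Proof.
move=> /is_homP hf finj.
apply: (@leq_card_on _ _ _ _ (fun p : gV F * gV F => (f p.1, f p.2))).
  by move=> [a b] [a' b'] _ _ [/finj -> /finj ->].
by move=> [a b]; rewrite !inE; apply: hf.
Qed.

(* Lovász: two surjective homomorphisms in opposite directions force equal
   vertex and edge counts, so either one is an isomorphism. *)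
Lemma hom_eq_iso (F G : graph) : (forall T, hom F T = hom G T) -> iso F G.
Proof.
move=> hom_eq.
have [g /andP [hg /eqP img]] := exists_surj_hom hom_eq.
have [f /andP [hf /eqP imf]] := exists_surj_hom (fun T => esym (hom_eq T)).
have cardV : #|gV F| = #|gV G|.
  by apply/eqP; rewrite eqn_leq (surj_ffun_card_le img) (surj_ffun_card_le imf).
have finj := surj_ffun_inj imf cardV.
have ginj := surj_ffun_inj img (esym cardV).
pose fE := fun p : gV F * gV F => (f p.1, f p.2).
have fE_inj : {in edge_set F &, injective fE}.
  by move=> [x y] [x' y'] _ _ [/finj -> /finj ->].
have fE_card : #|fE @: edge_set F| = #|edge_set G|.
  rewrite (card_in_imset fE_inj); apply/eqP.
  by rewrite eqn_leq (hom_inj_edge_card_le hf finj) (hom_inj_edge_card_le hg ginj).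
move/is_homP: hf => hf.
have fE_sub : fE @: edge_set F \subset edge_set G.
  by apply/subsetP => q /imsetP [[x y] xy ->]; rewrite !inE; apply: hf.
exists f; split; first by apply: inj_card_bij finj _; rewrite cardV.
move=> a b; apply/idP/idP; last exact: hf.
move=> eab; have : (f a, f b) \in fE @: edge_set F.
  by rewrite (subset_cardP fE_card fE_sub).
by case/imsetP => [[x y]]; rewrite inE => exy [/finj -> /finj ->].
Qed.

Local Open Scope R_scope.

Lemma INR_gt0 (n : nat) : (0 < n)%N -> 0 < INR n.
Proof. by move/ltP; apply: lt_0_INR. Qed.

Lemma INR_leq (m n : nat) : (m <= n)%N -> INR m <= INR n.
Proof. by move/leP; apply: le_INR. Qed.

Lemma INR_expn (m n : nat) : INR (m ^ n)%N = INR m ^ n.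
Proof. by elim: n => [|n IH] //=; rewrite expnS -multE mult_INR IH. Qed.

Lemma Rle_div_iff (a b c : R) : 0 < c -> a <= b / c <-> a * c <= b.
Proof.
move=> c_gt0; split=> h.
  by apply: Rle_trans (Rmult_le_compat_r _ _ _ (Rlt_le _ _ c_gt0) h) _; right; field; lra.
apply: (Rmult_le_reg_r c) => //; apply: Rle_trans h _; right; field; lra.
Qed.

Lemma ln_le (x y : R) : 0 < x -> x <= y -> ln x <= ln y.
Proof. by move=> x_gt0 [/(ln_increasing _ _ x_gt0)|->]; lra. Qed.

Lemma ln_le_inv (x y : R) : 0 < x -> 0 < y -> ln x <= ln y -> x <= y.
Proof.
move=> x_gt0 y_gt0 lnxy; have [//|yx] := Rle_or_lt x y.
by have := ln_increasing _ _ y_gt0 yx; lra.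
Qed.

Lemma ln_INR_le (m n : nat) : (0 < m)%N -> (m <= n)%N -> ln (INR m) <= ln (INR n).
Proof. by move=> m_gt0 /INR_leq; apply: ln_le; apply: INR_gt0. Qed.

Lemma ln_INR_ge0 (n : nat) : (0 < n)%N -> 0 <= ln (INR n).
Proof. by rewrite -ln_1; apply: (ln_INR_le (m := 1)). Qed.

Lemma ln_INR_expn (m k : nat) : (0 < m)%N -> ln (INR (m ^ k)%N) = INR k * ln (INR m).
Proof. by move=> m_gt0; rewrite INR_expn ln_pow //; apply: INR_gt0. Qed.

(* Once [hom_pos_transfer F G] holds, the graphs [T] with [hom G T = 0] impose
   no constraint in [HDE_set] (recall [hpow 0 c = 0]); the others are
   linearised by taking logarithms. *)
Definition hom_pos_transfer (F G : graph) : Prop :=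
  forall T : graph, (0 < hom G T)%N -> (0 < hom F T)%N.

Definition log_bound (F G : graph) (c : R) : Prop :=
  forall T : graph, (0 < hom G T)%N -> c * ln (INR (hom G T)) <= ln (INR (hom F T)).

Lemma hom_pos_transfer_arrow (F G : graph) : arrow F G -> hom_pos_transfer F G.
Proof. by move=> aFG T; apply: arrow_trans. Qed.

Lemma HDE_setE (F G : graph) (c : R) :
  hom_pos_transfer F G -> HDE_set F G c <-> log_bound F G c.
Proof.
rewrite /HDE_set /hpow /Rpower => P; split=> H T.
  move=> hG; have := H T; case: eqP => [homG0|_]; first by rewrite homG0 in hG.
  by move=> le; rewrite -(ln_exp (c * _)); apply: ln_le (exp_pos _) le.
case: eqP => [_|/eqP]; first exact: pos_INR.
rewrite -lt0n => hG; rewrite -(exp_ln _ (INR_gt0 (P T hG))).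
by have [lt|->] := H T hG; [left; apply: exp_increasing | right].
Qed.

Lemma log_bound_antimono (F G : graph) (c d : R) :
  log_bound F G d -> c <= d -> log_bound F G c.
Proof.
move=> bd cd T hG; apply: Rle_trans (bd T hG).
exact: Rmult_le_compat_r (ln_INR_ge0 hG) cd.
Qed.

Lemma log_bound0 (F G : graph) : hom_pos_transfer F G -> log_bound F G 0.
Proof. by move=> P T hG; rewrite Rmult_0_l; apply: ln_INR_ge0; apply: P. Qed.

(* Test against [K2loop]: [2 ^ #|gV G| ^ c <= 2 ^ #|gV F|]. *)
Lemma log_bound_le_card (F G : graph) (c : R) :
  log_bound F G c -> c <= INR #|gV F| / INR #|gV G|.
Proof.
move=> bd; apply/Rle_div_iff; first exact: INR_gt0 (gV_nonempty G).
have ln2_gt0 : 0 < ln (INR 2) by rewrite -ln_1; apply: ln_increasing => /=; lra.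
apply: (Rmult_le_reg_r _ _ _ ln2_gt0); rewrite Rmult_assoc.
by have := bd K2loop; rewrite !hom_K2loop !ln_INR_expn // expn_gt0; apply.
Qed.

Lemma HDE_maxP (F G : graph) : hom_pos_transfer F G ->
  log_bound F G (HDE F G) /\ forall c, log_bound F G c -> c <= HDE F G.
Proof.
move=> P.
have bounded : bound (HDE_set F G).
  by exists (INR #|gV F| / INR #|gV G|) => c /(HDE_setE _ P)/log_bound_le_card.
have inhabited : exists c, HDE_set F G c by exists 0; apply/(HDE_setE _ P)/log_bound0.
have [M lubM] := upper_bound_thm _ bounded inhabited.
have -> : HDE F G = M.
  by apply: (is_lub_u _ _ _ _ lubM); apply: epsilon_spec; exists M.
case: lubM => [ub least]; split=> [T hG|c /(HDE_setE _ P)/ub //].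
have lnF_ge0 := ln_INR_ge0 (P T hG).
have [homG_le1|homG_gt1] := leqP (hom G T) 1.
  have -> : hom G T = 1%N by apply/eqP; rewrite eqn_leq homG_le1.
  by rewrite /= ln_1 Rmult_0_r.
have lnG_gt0 : 0 < ln (INR (hom G T)).
  by rewrite -ln_1; apply: ln_increasing; [lra | apply/lt_1_INR/ltP].
apply/Rle_div_iff => //; apply: least => c /(HDE_setE _ P) bd.
by apply/Rle_div_iff => //; apply: bd.
Qed.

Lemma log_bound_HDE (F G : graph) :
  hom_pos_transfer F G -> log_bound F G (HDE F G).
Proof. by case/HDE_maxP. Qed.

Lemma HDE_ge (F G : graph) (c : R) :
  hom_pos_transfer F G -> log_bound F G c -> c <= HDE F G.
Proof. by case/HDE_maxP=> _; apply. Qed.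

Lemma HDE_ge0 (F G : graph) : hom_pos_transfer F G -> 0 <= HDE F G.
Proof. by move=> P; apply: HDE_ge (log_bound0 P). Qed.

Lemma HDE_eq (F G : graph) (x : R) : hom_pos_transfer F G ->
  log_bound F G x -> (forall c, log_bound F G c -> c <= x) -> HDE F G = x.
Proof.
move=> P bx ubx; apply: Rle_antisym; first exact/ubx/log_bound_HDE.
exact: HDE_ge.
Qed.

Lemma HDE_set_HDE (F G : graph) : arrow F G -> HDE_set F G (HDE F G).
Proof.
by move=> /hom_pos_transfer_arrow P; apply/(HDE_setE _ P)/log_bound_HDE.
Qed.

Lemma HDE_mul_le (F G H : graph) : arrow F G -> arrow G H ->
  HDE F G * HDE G H <= HDE F H.
Proof.
move=> aFG aGH; have PFG := hom_pos_transfer_arrow aFG.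
have PGH := hom_pos_transfer_arrow aGH.
apply: HDE_ge; first exact/hom_pos_transfer_arrow/(arrow_trans aFG aGH).
move=> T hH; rewrite Rmult_assoc; apply: Rle_trans (log_bound_HDE PFG (PGH T hH)).
exact: Rmult_le_compat_l (HDE_ge0 PFG) (log_bound_HDE PGH hH).
Qed.

Lemma hom_copies_gt0 (X T : graph) (k : nat) (k_gt0 : (0 < k)%N) :
  (0 < hom (copies k_gt0 X) T)%N = (0 < hom X T)%N.
Proof. by rewrite hom_copies expn_gt0 (negPf (lt0n_neq0 k_gt0)) orbF. Qed.

Section Copies.

Variables (F G : graph) (m n : nat) (m_gt0 : (0 < m)%N) (n_gt0 : (0 < n)%N).

Lemma hom_pos_transfer_copies :
  hom_pos_transfer F G -> hom_pos_transfer (copies m_gt0 F) (copies n_gt0 G).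
Proof. by move=> P T; rewrite !hom_copies_gt0; apply: P. Qed.

Lemma log_bound_copies (c : R) : hom_pos_transfer F G ->
  log_bound (copies m_gt0 F) (copies n_gt0 G) c <-> log_bound F G (c * INR n / INR m).
Proof.
move=> P; have m0 := INR_gt0 m_gt0.
split=> bd T hG.
- have := bd T; rewrite hom_copies_gt0 !hom_copies !ln_INR_expn //; last exact: P.
  move=> /(_ hG) le; apply: (Rmult_le_reg_l _ _ _ m0).
  by apply: Rle_trans le; right; field; lra.
- rewrite hom_copies_gt0 in hG; rewrite !hom_copies !ln_INR_expn //; last exact: P.
  have := Rmult_le_compat_l _ _ _ (Rlt_le _ _ m0) (bd T hG).
  by apply: Rle_trans; right; field; lra.
Qed.

Lemma HDE_copies : hom_pos_transfer F G ->
  HDE (copies m_gt0 F) (copies n_gt0 G) = INR m / INR n * HDE F G.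
Proof.
move=> P; have m0 := INR_gt0 m_gt0; have n0 := INR_gt0 n_gt0.
apply: HDE_eq; first exact: hom_pos_transfer_copies.
  apply/log_bound_copies => //; apply: log_bound_antimono (log_bound_HDE P) _.
  by right; field; lra.
move=> c /(log_bound_copies _ P) /(HDE_ge P) le.
apply: Rle_trans (Rmult_le_compat_l _ _ _ _ le); first by right; field; lra.
by apply: Rlt_le; apply: Rdiv_lt_0_compat.
Qed.

End Copies.

Lemma succeq_surj (F G : graph) (f : gV F -> gV G) :
  is_hom f -> (forall v, exists a, f a = v) -> succeq F G.
Proof.
move=> hf fsurj; have aFG : arrow F G by apply/hom_gt0P; exists f.
split=> //; apply: HDE_ge; first exact: hom_pos_transfer_arrow.
move=> T hG; rewrite Rmult_1_l; exact: ln_INR_le hG (hom_le_surj T hf fsurj).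
Qed.

Lemma hom_le_succeq (F G T : graph) : succeq F G -> (hom G T <= hom F T)%N.
Proof.
case=> /hom_pos_transfer_arrow P HDE_ge1.
have [->//|hG] := posnP (hom G T).
have := log_bound_antimono (log_bound_HDE P) HDE_ge1 hG; rewrite Rmult_1_l.
by move/(ln_le_inv (INR_gt0 hG) (INR_gt0 (P T hG)))/INR_le/leP.
Qed.

Lemma succeq_trans (F G H : graph) : succeq F G -> succeq G H -> succeq F H.
Proof.
move=> [aFG HFG] [aGH HGH]; split; first exact: arrow_trans aFG aGH.
apply: Rle_trans (HDE_mul_le aFG aGH).
by have := Rmult_le_compat _ _ _ _ Rle_0_1 Rle_0_1 HFG HGH; rewrite Rmult_1_l.
Qed.

Lemma succeq_antisym (F G : graph) : succeq F G -> succeq G F -> iso F G.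
Proof.
move=> sFG sGF; apply: hom_eq_iso => T; apply/eqP.
by rewrite eqn_leq (hom_le_succeq T sFG) (hom_le_succeq T sGF).
Qed.

Lemma HDE_ge_inv_card (F G : graph) : arrow F G ->
  (forall v : gV G, exists f : gV F -> gV G, is_hom f /\ exists a, f a = v) ->
  / INR #|gV G| <= HDE F G.
Proof.
move=> /hom_pos_transfer_arrow P cover; apply: (HDE_ge P) => T hG.
have G0 := INR_gt0 (gV_nonempty G).
have := ln_INR_le hG (hom_le_cover T cover); rewrite ln_INR_expn; last exact: P.
move=> le; apply: (Rmult_le_reg_l _ _ _ G0); apply: Rle_trans _ le.
by right; field; lra.
Qed.

Lemma cover_of_HDE_gt0 (F G : graph) : arrow F G -> 0 < HDE F G ->
  forall v : gV G, exists f : gV F -> gV G, is_hom f /\ exists a, f a = v.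
Proof.
move=> aFG HDE_gt0 v; apply: NNPP => uncovered.
have not_hit (f : gV F -> gV G) : is_hom f -> forall a, f a <> v.
  by move=> hf a fav; apply: uncovered; exists f; split => //; exists a.
have P := hom_pos_transfer_arrow aFG.
have [N N_big] := INR_unbounded (exp (ln (INR (hom F G)) / HDE F G)).
have N_gt0 : (0 < N)%N.
  rewrite lt0n; apply/eqP => N0; move: N_big; rewrite N0 /=.
  by have := exp_pos (ln (INR (hom F G)) / HDE F G); lra.
have hGT := hom_clone_ge v N; have hG := leq_trans N_gt0 hGT.
have lnN_big : ln (INR (hom F G)) / HDE F G < ln (INR N).
  by rewrite -[X in X < _]ln_exp; apply: ln_increasing => //; apply: exp_pos.
have lnN_bounded : HDE F G * ln (INR N) <= ln (INR (hom F G)).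
  apply: Rle_trans (Rmult_le_compat_l _ _ _ (Rlt_le _ _ HDE_gt0) (ln_INR_le N_gt0 hGT)) _.
  apply: Rle_trans (log_bound_HDE P hG) _.
  exact: ln_INR_le (P _ hG) (hom_clone_uncovered N not_hit).
have := Rmult_lt_compat_l _ _ _ HDE_gt0 lnN_big.
have -> : HDE F G * (ln (INR (hom F G)) / HDE F G) = ln (INR (hom F G)) by field; lra.
lra.
Qed.

Local Close Scope R_scope.

Theorem lemma2p2 :
  (forall F G : graph, arrow F G ->
     forall T : graph, Rle (hpow (hom G T) (HDE F G)) (INR (hom F T)))
  /\ (forall F : graph, succeq F F)
  /\ (forall F G H : graph, succeq F G -> succeq G H -> succeq F H)
  /\ (forall F G : graph, succeq F G -> succeq G F -> iso F G)
  /\ (forall F G H : graph, arrow F G -> arrow G H ->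
        Rle (Rmult (HDE F G) (HDE G H)) (HDE F H))
  /\ (forall (F G : graph) (m n : nat) (hm : 0 < m) (hn : 0 < n), arrow F G ->
        HDE (copies hm F) (copies hn G) = Rmult (Rdiv (INR m) (INR n)) (HDE F G))
  /\ (forall F G : graph,
        (exists f : gV F -> gV G, is_hom f /\ forall v : gV G, exists a, f a = v) ->
        succeq F G)
  /\ (forall F G : graph, arrow F G ->
        (Rlt R0 (HDE F G) <->
         forall v : gV G, exists f : gV F -> gV G, is_hom f /\ exists a, f a = v)).
Proof.
split; first by move=> F G /HDE_set_HDE.
split; first by move=> F; apply: (@succeq_surj F F id) => [|v]; [apply/is_homP | exists v].
split; first exact: succeq_trans.
split; first exact: succeq_antisym.
split; first exact: HDE_mul_le.
split; first by move=> F G m n hm hn /hom_pos_transfer_arrow; apply: HDE_copies.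
split; first by move=> F G [f [hf fsurj]]; apply: succeq_surj hf fsurj.
move=> F G aFG; split; first exact: cover_of_HDE_gt0.
move=> cover; apply: Rlt_le_trans (HDE_ge_inv_card aFG cover).
exact/Rinv_0_lt_compat/INR_gt0/gV_nonempty.
Qed.
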